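(* Let $n\geq 1$. The symmetric group $\mathfrak{S}_{n+1}$ admits the presentation $$\langle r_1,\dots,r_n\mid r_1^2=1,\ \ r_1r_jr_i=r_{i+1}r_j\ \text{for } 1\leq i<j\leq n\rangle,$$ where $r_i$ corresponds to the cycle $(1,2,\dots,i+1)$ for $1\leq i\leq n$. *)

From mathcomp Require Import all_boot all_order all_fingroup.
From mathcomp Require Import zify.
Set Implicit Arguments. Unset Strict Implicit. Unset Printing Implicit Defensive.


(* The cycle (0, 1, ..., m-1) on 'I_n.+1 (0-based), i.e. the paper's cycle
   (1, 2, ..., m) on {1, ..., n+1}, as a function: x |-> x+1 for x < m-1,
   m-1 |-> 0, and x |-> x for x >= m.  Meaningful for 1 <= m <= n+1. *)
Definition cyc_fun (n m : nat) (x : 'I_n.+1) : 'I_n.+1 :=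
  if ((x : nat).+1 < m)%N then inord (x : nat).+1
  else if ((x : nat).+1 == m)%N then ord0 else x.

Lemma cyc_fun_inj n m : m <= n.+1 -> injective (@cyc_fun n m).
Proof.
move=> hm x y; rewrite /cyc_fun.
have hx := ltn_ord x; have hy := ltn_ord y.
case: (ltnP x.+1 m) => h1; case: (ltnP y.+1 m) => h2;
  case: (x.+1 =P m) => e1; case: (y.+1 =P m) => e2;
  move/(congr1 val); rewrite /= ?inordK; try lia;
  move=> e; apply: val_inj; rewrite /=; lia.
Qed.

(* The permutation of 'I_n.+1 given by the cycle (0,...,m-1); the identity
   if m > n.+1 (never used in that range). *)
Definition cyc (n m : nat) : 'S_n.+1 :=
  match leqP m n.+1 with
  | LeqNotGtn h => perm (@cyc_fun_inj n m h)
  | GtnNotLeq _ => 1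
  end.

Definition r (n i : nat) : 'S_n.+1 := cyc n i.+1.

(* Product of permutations as composition of functions, (s o t)(x) = s (t x),
   which is the convention of the paper (MathComp's [*] on perms is
   (s * t) x = t (s x)). *)
Definition compp (n : nat) (s t : 'S_n.+1) : 'S_n.+1 := (t * s)%g.

Record group_str := GroupStr {
  gcar :> Type;
  gmul : gcar -> gcar -> gcar;
  gone : gcar;
  ginv : gcar -> gcar;
  gmulA : forall x y z, gmul x (gmul y z) = gmul (gmul x y) z;
  gmul1 : forall x, gmul gone x = x;
  gmulV : forall x, gmul (ginv x) x = gone
}.

Definition pres_relations (G : Type) (mul : G -> G -> G) (one : G)
    (n : nat) (x : nat -> G) : Prop :=
  mul (x 1) (x 1) = one /\
  forall i j, 1 <= i -> i < j -> j <= n ->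
    mul (mul (x 1) (x j)) (x i) = mul (x i.+1) (x j).

From mathcomp Require Import all_boot all_order all_fingroup.
From mathcomp Require Import zify.
Set Implicit Arguments. Unset Strict Implicit. Unset Printing Implicit Defensive.

(* We prove generation and the universal property together, by induction on
   n.  Let c = r_{n+1} be the (n+2)-cycle and embed S_{n+1} into S_{n+2} as
   the stabiliser of the last point (map [embed]).  Every permutation of
   S_{n+2} is uniquely  embed t o c^a  with a taken mod n+2 ([coset_decomp],
   [coset_decomp_uniq]); this gives generation at once.  For the universal
   property, let h satisfy the relations for n+1 and let phi' : S_{n+1} -> H
   be given by induction.  In any group, the relations force h_{n+1}^{n+2}
   = 1 ([top_order]) and "twisted commutation" rules
   h_{n+1}^a h_x = w(h) h_{n+1}^c for x in {1, n}, where the word w and the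
   exponent c do not depend on the group ([twist_word_first],
   [twist_word_last]); so the same rules hold for the r_i themselves.  The
   twisted commutation property is closed under products, hence propagates
   from r_1, r_n to all of S_{n+1} ([twisted_all]), and then
   phi (embed t o c^a) := phi'(t) h_{n+1}^a is a homomorphism ([extension_hom]). *)

Import GroupScope.

Lemma r_val n i (x : 'I_n.+1) : i <= n ->
  val (r n i x) = if x < i then x.+1 else if x == i :> nat then 0 else val x.
Proof.
move=> hi; rewrite /r /cyc; case: leqP => h; last by lia.
rewrite permE /cyc_fun ltnS eqSS.
case: ifP => h1; first by rewrite /= inordK //; lia.
by case: ifP.
Qed.

(* r_0 is the trivial cycle; it lets us treat the identity as r_0. *)
Lemma r0 n : r n 0 = 1.
Proof.
apply/permP => x; apply: val_inj; rewrite r_val // ltn0 perm1.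
by case: ifP => // /eqP h; rewrite -h.
Qed.

Lemma r_relations n : pres_relations (@compp n) 1 n (r n).
Proof.
split.
  apply/permP => x; apply: val_inj; rewrite /compp permM perm1.
  have hx := ltn_ord x.
  case: n x hx => [|n] x hx.
    by rewrite /r /cyc; case: leqP => //; rewrite perm1 perm1.
  rewrite !r_val //; repeat (case: ifP => /=); try lia; (try move/eqP); lia.
move=> i j h1 h2 h3; apply/permP => x; apply: val_inj; rewrite /compp !permM.
have hx := ltn_ord x.
rewrite !r_val //; try lia;
  repeat (case: ifP => /=); try lia; (try move/eqP); (try move/eqP); lia.
Qed.

Local Close Scope group_scope.

Section GroupStrTheory.
Variable H : group_str.
Local Notation m := (@gmul H).
Local Notation e := (@gone H).
Local Notation iv := (@ginv H).

Lemma gmulVr (x : H) : m x (iv x) = e.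
Proof.
by rewrite -[LHS]gmul1 -(gmulV (iv x)) -gmulA (gmulA (iv x) x) gmulV gmul1 gmulV.
Qed.

Lemma gmulr1 (x : H) : m x e = x.
Proof. by rewrite -(gmulV x) gmulA gmulVr gmul1. Qed.

Lemma gmulK (x y : H) : m (iv x) (m x y) = y.
Proof. by rewrite gmulA gmulV gmul1. Qed.

Lemma gmulKV (x y : H) : m x (m (iv x) y) = y.
Proof. by rewrite gmulA gmulVr gmul1. Qed.

Lemma gcancel_l (x y z : H) : m x y = m x z -> y = z.
Proof. by move=> E; rewrite -(gmulK x y) E gmulK. Qed.

Lemma gcancel_r (x y z : H) : m y x = m z x -> y = z.
Proof. by move=> E; rewrite -(gmulr1 y) -(gmulVr x) gmulA E -gmulA gmulVr gmulr1. Qed.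

Lemma ginv_unique (x y : H) : m x y = e -> x = iv y.
Proof. by move=> E; apply: (@gcancel_r y); rewrite E gmulV. Qed.

Fixpoint gexp (x : H) (k : nat) : H := if k is k'.+1 then m x (gexp x k') else e.

Lemma gexpSr x k : gexp x k.+1 = m (gexp x k) x.
Proof. by elim: k => [|k IH] /=; [rewrite gmulr1 gmul1 | rewrite -gmulA -IH]. Qed.

Lemma gexpD x a b : gexp x (a + b) = m (gexp x a) (gexp x b).
Proof. by elim: a => [|a IH] /=; [rewrite gmul1 | rewrite IH gmulA]. Qed.

Lemma gexp_mod x N a : gexp x N.+1 = e -> gexp x a = gexp x (a %% N.+1).
Proof.
move=> E; rewrite {1}(divn_eq a N.+1) gexpD.
suff -> : gexp x (a %/ N.+1 * N.+1) = e by rewrite gmul1.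
by elim: (a %/ N.+1) => [|q IH] //; rewrite mulSn gexpD E gmul1.
Qed.

Lemma gexp_conj y x k : gexp (m (iv y) (m x y)) k = m (iv y) (m (gexp x k) y).
Proof.
elim: k => [|k IH] /=; first by rewrite gmul1 gmulV.
by rewrite IH -!gmulA gmulKV.
Qed.

End GroupStrTheory.

(* The family h extended by h_0 := 1, matching r_0 = 1. *)
Definition hext (H : group_str) (h : nat -> H) (k : nat) : H :=
  if k is 0 then gone H else h k.

(* Words in the generators: a list of (index, inverted?) pairs. *)
Definition eval_word (H : group_str) (f : nat -> H) (w : seq (nat * bool)) : H :=
  foldr (fun p acc => gmul (if p.2 then ginv (f p.1) else f p.1) acc) (gone H) w.

Definition relH (H : group_str) N (h : nat -> H) :=
  pres_relations (@gmul H) (@gone H) N h.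

(* ** Consequences of the relations in an arbitrary group *)

Section Relations.
Variable H : group_str.
Local Notation m := (@gmul H).
Local Notation e := (@gone H).
Local Notation iv := (@ginv H).
Variables (N : nat) (h : nat -> H).
Hypothesis hN : 1 <= N.
Hypothesis hrel : relH N h.
Local Notation g := (hext h).

Lemma rel_shift i z : i < N -> m (h 1) (m (h N) (m (g i) z)) = m (g i.+1) (m (h N) z).
Proof.
case: i => [|i] hi /=; first by rewrite gmul1.
by case: hrel => _ R; rewrite !gmulA R // -gmulA.
Qed.

Lemma rel_shift_iter a k z : a + k <= N ->
  m (g a) (m (gexp (h N) a) (m (g k) z)) = m (g (a + k)) (m (gexp (h N) a) z).
Proof.
elim: a => [|a IH] hak /=; first by rewrite !gmul1.
rewrite -gmulA -rel_shift; last by lia.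
rewrite IH; last by lia.
by rewrite rel_shift ?addSn -?gmulA //; lia.
Qed.

Lemma rel_shift_iter_inv a k z : a + k <= N ->
  m (gexp (h N) a) (m (g k) z) = m (iv (g a)) (m (g (a + k)) (m (gexp (h N) a) z)).
Proof. by move=> hak; rewrite -rel_shift_iter // gmulK. Qed.

Lemma h1_invol z : m (h 1) (m (h 1) z) = z.
Proof. by case: hrel => E _; rewrite gmulA E gmul1. Qed.

Lemma hext_last : g N = h N.
Proof. by move: hN; rewrite /g; case: N. Qed.

(* The relation with i = N-1, j = N expresses g_{N-1} through h_1 and h_N. *)
Lemma hext_penult : 2 <= N -> g N.-1 = m (iv (h N)) (m (h 1) (m (h N) (h N))).
Proof.
move=> h2; apply: (@gcancel_l _ (h N)); rewrite gmulKV.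
have gN : g N.-1 = h N.-1 by move: h2; rewrite /g; case: N => [|[|n]].
have := hrel.2 N.-1 N; rewrite (_ : N.-1.+1 = N); last by lia.
move=> /(_ ltac:(lia) ltac:(lia) (leqnn _)) E.
by rewrite gN -E -!gmulA h1_invol.
Qed.

Lemma gexp_h1hN k : k <= N -> gexp (m (h 1) (h N)) k = m (g k) (gexp (h N) k).
Proof.
elim: k => [|k IH] hk /=; first by rewrite gmul1.
by rewrite IH; [rewrite -gmulA rel_shift; [|lia]|lia].
Qed.

Lemma top_order : (2 <= N -> gexp (g N.-1) N = e) -> gexp (h N) N.+1 = e.
Proof.
move=> Ho; case: (ltnP N 2) => h2.
  by rewrite (_ : N = 1) /=; [apply: h1_invol | lia].
have := Ho h2; rewrite hext_penult // (gmulA (h 1)) gexp_conj => E.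
have E2 : m (gexp (m (h 1) (h N)) N) (h N) = m e (h N).
  by rewrite gmul1; apply: (@gcancel_l _ (iv (h N))); rewrite E gmulV.
by have := gcancel_r E2; rewrite gexp_h1hN // hext_last.
Qed.

End Relations.

(* ** Twisted commutation of h_N^a past g_1 and g_{N-1} *)

Section Twisted.
Variable H : group_str.
Local Notation m := (@gmul H).
Local Notation e := (@gone H).
Local Notation iv := (@ginv H).
Variables (N : nat) (h : nat -> H).
Hypothesis h2 : 2 <= N.
Hypothesis hrel : relH N h.
Hypothesis hord : gexp (h N) N.+1 = e.
Local Notation g := (hext h).
Let hN : 1 <= N. Proof. by lia. Qed.

Lemma gexp_top_inv : gexp (h N) N = iv (h N).
Proof. by apply: ginv_unique; rewrite -gexpSr. Qed.

Lemma twist_first_low a : a <= N.-2 ->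
  m (gexp (h N) a) (g 1) = m (iv (g a)) (m (g a.+1) (gexp (h N) a)).
Proof.
move=> ha; have := rel_shift_iter_inv hN hrel (a:=a) (k:=1) e.
by rewrite !gmulr1 addn1; apply; lia.
Qed.

Lemma twist_first_penult :
  m (gexp (h N) N.-1) (g 1) = m (iv (g N.-1)) (gexp (h N) N).
Proof.
rewrite -[g 1]gmulr1 (rel_shift_iter_inv hN hrel) ?addn1 ?prednK // gmulr1.
have gexp_pred k x : 0 < k -> gexp x k = m x (gexp x k.-1) by case: k.
by rewrite (hext_last h hN) [in RHS]gexp_pred.
Qed.

Lemma twist_first_top : m (gexp (h N) N) (g 1) = m (g N.-1) (gexp (h N) N.-1).
Proof.
rewrite (hext_penult hN hrel h2) gexp_top_inv -!gmulA; congr (m _ _).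
have -> : m (h N) (m (h N) (gexp (h N) N.-1)) = e.
  by rewrite -hord (_ : N.+1 = N.-1.+2) //; lia.
by rewrite gmulr1.
Qed.

Lemma twist_last a : 1 <= a <= N ->
  m (gexp (h N) a) (g N.-1) = m (iv (g a.-1)) (m (g a) (gexp (h N) a.+1)).
Proof.
move=> ha; rewrite (_ : a = a.-1.+1); last by lia.
rewrite gexpSr -gmulA (hext_penult hN hrel h2) gmulKV.
rewrite -[h 1]/(g 1) (rel_shift_iter_inv hN hrel); last by lia.
by rewrite addn1 gexpSr gexpSr -!gmulA.
Qed.

End Twisted.

Definition twist_uniform N a x :=
  exists w c, all (fun p => p.1 <= N.-1) w /\
    forall (H : group_str) (h : nat -> H), relH N h -> gexp (h N) N.+1 = gone H ->
      gmul (gexp (h N) a) (hext h x) = gmul (eval_word (hext h) w) (gexp (h N) c).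

Lemma twist_word_first N a : 2 <= N -> a <= N -> twist_uniform N a 1.
Proof.
move=> h2 ha; case: (ltnP a N.-1) => h3.
  exists [:: (a, true); (a.+1, false)], a; split; first by rewrite /= !andbT; lia.
  move=> H h hr ho; rewrite twist_first_low //; last by lia.
  by rewrite /eval_word /= gmulr1 -gmulA.
case: (ltnP a N) => h4.
  rewrite (_ : a = N.-1); last by lia.
  exists [:: (N.-1, true)], N; split; first by rewrite /= !andbT.
  by move=> H h hr ho; rewrite twist_first_penult // /eval_word /= gmulr1.
rewrite (_ : a = N); last by lia.
exists [:: (N.-1, false)], N.-1; split; first by rewrite /= !andbT.
by move=> H h hr ho; rewrite twist_first_top // /eval_word /= gmulr1.
Qed.

Lemma twist_word_last N a : 2 <= N -> a <= N -> twist_uniform N a N.-1.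
Proof.
move=> h2 ha; case: a ha => [|a] ha.
  exists [:: (N.-1, false)], 0; split; first by rewrite /= !andbT.
  by move=> H h hr ho; rewrite /eval_word /= !gmulr1 gmul1.
case: (ltnP a.+1 N) => h3.
  exists [:: (a, true); (a.+1, false)], a.+2; split; first by rewrite /= !andbT; lia.
  move=> H h hr ho; rewrite twist_last //.
  by rewrite /eval_word /= gmulr1 -gmulA.
(* For a = N the factor g_N = h_N is absorbed into the power of h_N. *)
have ->: a.+1 = N by lia.
exists [:: (N.-1, true)], N.+2; split; first by rewrite /= !andbT.
move=> H h hr ho; rewrite (twist_last h2 hr); last by lia.
by rewrite /eval_word /= gmulr1 (hext_last h (ltnW h2)).
Qed.

Local Open Scope group_scope.

Lemma comppA n (x y z : 'S_n.+1) : compp x (compp y z) = compp (compp x y) z.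
Proof. by rewrite /compp mulgA. Qed.
Lemma compp1 n (x : 'S_n.+1) : compp 1 x = x.
Proof. by rewrite /compp mulg1. Qed.
Lemma comppV n (x : 'S_n.+1) : compp x^-1 x = 1.
Proof. by rewrite /compp mulgV. Qed.

Definition perm_group n : group_str := GroupStr (@comppA n) (@compp1 n) (@comppV n).

Lemma gexp_perm n (x : 'S_n.+1) k : gexp (H:=perm_group n) x k = x ^+ k.
Proof. by elim: k => [|k IH] //=; rewrite IH /compp expgSr. Qed.

Lemma hext_r n k : hext (H:=perm_group n) (r n) k = r n k.
Proof. by case: k => //=; rewrite r0. Qed.

(* ** S_{n+1} as the stabiliser of the last point of S_{n+2} *)

Definition embed n (s : 'S_n.+1) : 'S_n.+2 := lift_perm ord_max ord_max s.

Lemma embedM n (s t : 'S_n.+1) : embed (s * t) = embed s * embed t.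
Proof. by rewrite /embed lift_permM. Qed.
Lemma embed1 n : embed (1 : 'S_n.+1) = 1.
Proof. exact: lift_perm1. Qed.
Lemma embedV n (s : 'S_n.+1) : embed s^-1 = (embed s)^-1.
Proof. by rewrite /embed lift_permV. Qed.
Lemma embed_fix n (t : 'S_n.+1) : embed t ord_max = ord_max.
Proof. exact: lift_perm_id. Qed.

Lemma embed_inj n : injective (@embed n).
Proof.
move=> s t E; apply/permP => x; apply: (@lift_inj _ ord_max).
by have := congr1 (fun p : 'S_n.+2 => p (lift ord_max x)) E; rewrite /embed !lift_perm_lift.
Qed.

Lemma embed_r n k : k <= n -> embed (r n k) = r n.+1 k.
Proof.
move=> hk; have hk1 : k <= n.+1 by lia.
apply/permP => x; case: (unliftP ord_max x) => [[y hy] ->|->]; apply: val_inj.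
  rewrite /embed lift_perm_lift; apply: (etrans (lift_max _)).
  rewrite r_val // r_val //=.
  by have -> : bump n.+1 y = y by rewrite /bump; case: leqP => //=; lia.
rewrite embed_fix r_val //=.
by case: ifP => h1; [lia | case: ifP => // /eqP; lia].
Qed.

Lemma embed_word n w : all (fun p => p.1 <= n) w ->
  embed (eval_word (H:=perm_group n) (hext (H:=perm_group n) (r n)) w)
  = eval_word (H:=perm_group n.+1) (hext (H:=perm_group n.+1) (r n.+1)) w.
Proof.
elim: w => [|[k b] w IH] /=; first by rewrite embed1.
move=> /andP [hk hw]; rewrite /compp embedM IH // !hext_r.
by case: b; rewrite ?embedV embed_r.
Qed.

Lemma fix_last_embed n (p : 'S_n.+2) : p ord_max = ord_max -> exists t, p = embed t.
Proof.
move=> hp; pose f (y : 'I_n.+1) := odflt y (unlift ord_max (p (lift ord_max y))).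
have key y : lift ord_max (f y) = p (lift ord_max y).
  rewrite /f; case: unliftP => [z E|E] //=.
  have : lift ord_max y = ord_max by apply: (@perm_inj _ p); rewrite E hp.
  by move/eqP; rewrite eq_sym (negbTE (neq_lift _ _)).
have finj : injective f.
  by move=> y1 y2 E; apply: (@lift_inj _ ord_max); apply: (@perm_inj _ p); rewrite -!key E.
exists (perm finj); apply/permP => x; case: (unliftP ord_max x) => [y ->|->].
  by rewrite /embed lift_perm_lift permE key.
by rewrite /embed lift_perm_id hp.
Qed.

Lemma rot_pow_val n a (x : 'I_n.+1) : val ((r n n ^+ a) x) = (x + a) %% n.+1.
Proof.
have rot_val (y : 'I_n.+1) : val (r n n y) = (y + 1) %% n.+1.
  rewrite r_val //; have hy := ltn_ord y.
  case: ifP => h1; first by rewrite modn_small; lia.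
  by case: ifP => [/eqP -> | ]; [rewrite addn1 modnn | lia].
elim: a => [|a IH]; first by rewrite expg0 perm1 addn0 modn_small.
by rewrite expgSr permM rot_val IH modnDml -addnA addn1.
Qed.

Lemma rot_pow_mod n a : r n n ^+ a = r n n ^+ (a %% n.+1).
Proof. by apply/permP => x; apply: val_inj; rewrite !rot_pow_val modnDmr. Qed.

Lemma rot_order n : r n n ^+ n.+1 = 1.
Proof. by rewrite rot_pow_mod modnn expg0. Qed.

(* ** Coset decomposition S_{n+2} = <r_{n+1}> . embed S_{n+1} *)

(* Existence: rotate the preimage of the last point onto the last point. *)
Lemma coset_decomp n (s : 'S_n.+2) : exists a t, s = r n.+1 n.+1 ^+ a * embed t.
Proof.
set y := s^-1 ord_max; set a := n.+1 - y.
have E : (r n.+1 n.+1 ^+ a) y = ord_max.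
  apply: val_inj; rewrite rot_pow_val /= /a; have := ltn_ord y => hy.
  by rewrite subnKC ?modn_small //; lia.
have [t Ht] : exists t, (r n.+1 n.+1 ^+ a)^-1 * s = embed t.
  by apply: fix_last_embed; rewrite permM -E permK permKV.
by exists a, t; rewrite -Ht mulKVg.
Qed.

Lemma coset_decomp_uniq n a b t u :
  r n.+1 n.+1 ^+ a * embed t = r n.+1 n.+1 ^+ b * embed u ->
  a %% n.+2 = b %% n.+2 /\ t = u.
Proof.
set R := r n.+1 n.+1 => E.
(* Both rotations send x := R^-b(last) to the last point. *)
set x := (R ^+ b)^-1 ord_max.
have hb : (R ^+ b) x = ord_max by rewrite permKV.
have ha : (R ^+ a) x = ord_max.
  have := congr1 (fun p : 'S_n.+2 => p x) E; rewrite !permM hb embed_fix => Ea.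
  by rewrite -(embed_fix t^-1) embedV -Ea permK.
have hab : a %% n.+2 = b %% n.+2.
  apply/eqP; rewrite -(eqn_modDl x); apply/eqP.
  by rewrite -!rot_pow_val ha hb.
split => //; apply: embed_inj; apply: (@mulgI _ (R ^+ a)).
by rewrite E [R ^+ a]rot_pow_mod hab -rot_pow_mod.
Qed.

Definition generates n := << [set r n (val i).+1 | i : 'I_n] >> = [set: 'S_n.+1].

Lemma generates0 : generates 0.
Proof.
apply/eqP; rewrite eqEcard subsetT cardsT card_Sn /=.
exact: cardG_gt0.
Qed.

(* S_{n+2} is generated by r_{n+1} and the embedded copy of S_{n+1}. *)
Lemma generates_step n : generates n -> generates n.+1.
Proof.
move=> Gn; set A := [set r n.+1 (val i).+1 | i : 'I_n.+1].
have embed_in t : embed t \in <<A>>.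
  have : t \in <<[set r n (val i).+1 | i : 'I_n]>> by rewrite Gn inE.
  case/gen_prodgP=> k [c hc ->].
  apply: (big_ind (fun p => embed p \in <<A>>)).
  - by rewrite embed1 group1.
  - by move=> x y hx hy; rewrite embedM groupM.
  move=> i _; have /imsetP [j _ ->] := hc i.
  rewrite embed_r ?mem_gen //; last exact: ltn_ord.
  by apply/imsetP; exists (widen_ord (leqnSn _) j).
have hR : r n.+1 n.+1 \in <<A>>.
  by apply: mem_gen; apply/imsetP; exists ord_max.
apply/eqP; rewrite eqEsubset subsetT /=; apply/subsetP => s _.
have [a [t ->]] := coset_decomp s.
by rewrite groupM ?groupX ?embed_in.
Qed.

Section Hom.
Variables (H : group_str) (n : nat) (phi : 'S_n.+1 -> H).
Hypothesis hom : forall s t, phi (compp s t) = gmul (phi s) (phi t).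

Lemma hom1 : phi 1 = gone H.
Proof. by apply: (@gcancel_l _ (phi 1)); rewrite gmulr1 -hom /compp mulg1. Qed.

Lemma homV s : phi s^-1 = ginv (phi s).
Proof. by apply: ginv_unique; rewrite -hom /compp mulgV hom1. Qed.

Lemma homX s k : phi (s ^+ k) = gexp (phi s) k.
Proof. by elim: k => [|k IH] /=; [rewrite expg0 hom1 | rewrite expgSr -IH -hom]. Qed.

Lemma hom_word (h : nat -> H) w :
  (forall k, k <= n -> phi (r n k) = hext h k) -> all (fun p => p.1 <= n) w ->
  phi (eval_word (H:=perm_group n) (hext (H:=perm_group n) (r n)) w) = eval_word (hext h) w.
Proof.
move=> hr; elim: w => [|[k b] w IH] /=; first by rewrite /eval_word /= hom1.
move=> /andP [hk hw]; rewrite hom IH // hext_r.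
by case: b; rewrite ?homV hr.
Qed.

End Hom.

(* ** The universal property *)

Definition universal n := forall (H : group_str) (h : nat -> H),
  pres_relations (@gmul H) (@gone H) n h ->
  exists phi : 'S_n.+1 -> H,
    (forall s t, phi (compp s t) = gmul (phi s) (phi t)) /\
    (forall i, 1 <= i <= n -> phi (r n i) = h i).

Lemma universal0 : universal 0.
Proof.
move=> H h _; exists (fun _ => gone H); split; first by move=> s t; rewrite gmul1.
by case=> [|i] /andP [].
Qed.

Lemma relations_restrict (H : group_str) N (h : nat -> H) : relH N.+1 h -> relH N h.
Proof. by case=> h1 R; split => // i j hi hij hjN; apply: R => //; lia. Qed.

(* Extending phi' : S_{n+1} -> H to S_{n+2} by sending r_{n+1} to h_{n+1}. *)
Section Extension.
Variables (H : group_str) (n : nat) (h : nat -> H) (phi' : 'S_n.+1 -> H).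
Hypothesis Gn : generates n.
Hypothesis hom : forall s t, phi' (compp s t) = gmul (phi' s) (phi' t).
Hypothesis hval : forall k, k <= n -> phi' (r n k) = hext h k.
Hypothesis hrel : relH n.+1 h.
Hypothesis hord : gexp (h n.+1) n.+2 = gone H.
Local Notation R := (r n.+1 n.+1).
Local Notation top := (h n.+1).

Definition twisted (u : 'S_n.+1) : Prop := forall a, exists b u',
  embed u * R ^+ a = R ^+ b * embed u' /\
  gmul (gexp top a) (phi' u) = gmul (phi' u') (gexp top b).

Lemma twisted1 : twisted 1.
Proof. by move=> a; exists a, 1; rewrite embed1 mul1g mulg1 (hom1 hom) gmulr1 gmul1. Qed.

Lemma twistedM u v : twisted u -> twisted v -> twisted (u * v).
Proof.
move=> hu hv a; have [b2 [v' [E2 F2]]] := hv a; have [b1 [u' [E1 F1]]] := hu b2.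
exists b1, (u' * v'); split.
  by rewrite embedM -mulgA E2 mulgA E1 -mulgA -embedM.
rewrite -[u * v]/(compp v u) -[u' * v']/(compp v' u') !hom.
by rewrite gmulA F2 -gmulA F1 gmulA.
Qed.

Lemma twistedV u : twisted u -> twisted u^-1.
Proof.
move=> hu; rewrite invg_expg.
by elim: #[u].-1 => [|k IH]; [rewrite expg0; exact: twisted1 | rewrite expgS; exact: twistedM].
Qed.

(* r_1 and r_n are twisted: the uniform twisted commutation words hold both
   in S_{n+2} and in H, and [embed] resp. phi' carry one side to the other. *)
Lemma twisted_end (x : nat) : (x = 1 \/ x = n)%N -> 1 <= n -> twisted (r n x).
Proof.
move=> hx hn a; set a0 := a %% n.+2.
have ha0 : a0 <= n.+1 by rewrite -ltnS ltn_mod.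
have hxn : x <= n by case: hx => ->.
have [w [b [hw Hw]]] : twist_uniform n.+1 a0 x.
  by case: hx => ->; [apply: twist_word_first | apply: twist_word_last]; lia.
exists b, (eval_word (H:=perm_group n) (hext (H:=perm_group n) (r n)) w); split.
  rewrite embed_r // embed_word // [R ^+ a]rot_pow_mod.
  have := Hw (perm_group n.+1) (r n.+1) (r_relations n.+1).
  by rewrite !gexp_perm hext_r; apply; rewrite rot_order.
by rewrite (gexp_mod a hord) (hom_word hom hval hw) hval //; apply: Hw.
Qed.

(* Every element is twisted: the generators r_i are, by induction on i. *)
Lemma twisted_all u : twisted u.
Proof.
have twisted_r i : 1 <= i <= n -> twisted (r n i).
  case/andP; elim: i => // i IH _ hin.
  case: i IH hin => [|i] IH hin; first by apply: twisted_end; [left | lia].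
  (* the relation with j = n gives r_{i+2} = r_n^-1 r_{i+1} r_n r_1 *)
  have E := (r_relations n).2 i.+1 n isT hin (leqnn n); rewrite /compp in E.
  have -> : r n i.+2 = (r n n)^-1 * (r n i.+1 * (r n n * r n 1)) by rewrite E mulKg.
  have [t1 tn] : twisted (r n 1) /\ twisted (r n n).
    by split; apply: twisted_end; by [left | right | lia].
  apply: twistedM; first exact: twistedV.
  by apply: twistedM; [apply: IH; lia | exact: twistedM].
have : u \in <<[set r n (val i).+1 | i : 'I_n]>> by rewrite Gn inE.
case/gen_prodgP => k [f hf ->]; apply: (big_ind twisted twisted1 twistedM) => i _.
by have /imsetP [j _ ->] := hf i; apply: twisted_r; rewrite ltn_ord.
Qed.

(* phi (embed t o r_{n+1}^a) := phi' t h_{n+1}^a, well defined by uniqueness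
   of the coset decomposition and h_{n+1}^{n+2} = 1. *)
Definition extension (s : 'S_n.+2) : H :=
  if [pick p : 'I_n.+2 * 'S_n.+1 | s == R ^+ p.1 * embed p.2] is Some p
  then gmul (phi' p.2) (gexp top p.1) else gone H.

Lemma extension_coset a t : extension (R ^+ a * embed t) = gmul (phi' t) (gexp top a).
Proof.
rewrite /extension; case: pickP => [[a' t'] /eqP /= E | none].
  have [ha <-] := coset_decomp_uniq (esym E).
  by rewrite (gexp_mod a hord) (gexp_mod a' hord) ha.
by have := none (Ordinal (ltn_mod a n.+2), t); rewrite /= -rot_pow_mod eqxx.
Qed.

(* Multiplicativity: commute r_{n+1}^a past embed v by twisted commutation. *)
Lemma extension_hom s t : extension (compp s t) = gmul (extension s) (extension t).
Proof.
have [a [u ->]] := coset_decomp s; have [b [v ->]] := coset_decomp t.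
have [d [v' [E F]]] := twisted_all v a.
have -> : compp (R ^+ a * embed u) (R ^+ b * embed v) = R ^+ (b + d) * embed (v' * u).
  by rewrite /compp mulgA -(mulgA _ (embed v)) E !mulgA -expgD -mulgA -embedM.
rewrite !extension_coset -[v' * u]/(compp u v') hom addnC gexpD.
by rewrite -!gmulA (gmulA (gexp _ a)) F -gmulA.
Qed.

Lemma extension_r i : 1 <= i <= n.+1 -> extension (r n.+1 i) = h i.
Proof.
case/andP=> hi1 hi2; case: (ltnP i n.+1) => hi3.
  have -> : r n.+1 i = R ^+ 0 * embed (r n i) by rewrite expg0 mul1g embed_r.
  rewrite extension_coset hval //=.
  by rewrite gmulr1; case: i hi1 {hi2 hi3}.
have -> : i = n.+1 by lia.
have -> : R = R ^+ 1 * embed 1 by rewrite expg1 embed1 mulg1.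
by rewrite extension_coset (hom1 hom) gmul1 /= gmulr1.
Qed.

End Extension.

Lemma universal_step n : generates n -> universal n -> universal n.+1.
Proof.
move=> Gn Pn H h hrel.
have [phi' [hom hval']] := Pn H h (relations_restrict hrel).
have hval k : k <= n -> phi' (r n k) = hext h k.
  by case: k => [|k] hk; [rewrite r0 (hom1 hom) | rewrite hval'].
(* h_{n+1} has order dividing n+2, since phi' r_n = h_n has order dividing n+1 *)
have hord : gexp (h n.+1) n.+2 = gone H.
  apply: (top_order (N:=n.+1)) => // _.
  by rewrite -[hext h n.+1.-1]hval // -(homX hom) rot_order (hom1 hom).
exists (extension h phi'); split.
  exact: (extension_hom Gn hom hval hrel hord).
exact: (extension_r hom hval hord).
Qed.

Lemma presentation n : generates n /\ universal n.
Proof.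
elim: n => [|n [Gn Pn]]; first by split; [exact: generates0 | exact: universal0].
by split; [exact: generates_step | exact: universal_step].
Qed.

Theorem corollary5p3 (n : nat) (hn : 1 <= n) :
  (* the r_i generate S_{n+1} *)
  << [set r n (val i).+1 | i : 'I_n] >> = [set: 'S_n.+1]
  (* the r_i satisfy the relations *)
  /\ pres_relations (@compp n) 1 n (r n)
  (* universal property: any family satisfying the relations in any group
     is the image of the r_i under a (unique) group homomorphism *)
  /\ (forall (H : group_str) (h : nat -> H),
        pres_relations (@gmul H) (gone H) n h ->
        exists phi : 'S_n.+1 -> H,
          (forall s t, phi (compp s t) = gmul (phi s) (phi t)) /\
          (forall i, 1 <= i <= n -> phi (r n i) = h i)).
Proof.
have [gen univ] := presentation n.
by split; [exact: gen | split; [exact: r_relations | exact: univ]].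
Qed.
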